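(* Let $\mathbf t:\mathcal D\to\mathcal T$ be a monoidal refinement system with enough pushforwards, and let $W$ be a monoid in $\mathcal T$ with multiplication $p:W\otimes W\to W$. Then for all $P,Q\sqsubset W$ there is a natural isomorphism of presheaves on $W^{+}$ $$(P\otimes_WQ)^{+}\cong{}^{\perp}\Big(\big(P^{+}\otimes_{W^{+}}Q^{+}\big)^{\perp}\Big),$$ where the duals are taken with respect to $W$.
   Context: A refinement system is a functor $\mathbf{t}:\mathcal{D}\to\mathcal{T}$; composition is diagrammatic. Write $P\sqsubset A$ if $\mathbf t(P)=A$; a derivation of $P\Rightarrow_cQ$ is a morphism $\alpha:P\to Q$ with $\mathbf t(\alpha)=c$. A pushforward of $P\sqsubset A$ along $c:A\to B$ is $c_!P\sqsubset B$ with a derivation $\kappa$ of $P\Rightarrow_cc_!P$ such that pre-composition with $\kappa$ is a bijection from derivations of $c_!P\Rightarrow_dQ$ to derivations of $P\Rightarrow_{c;d}Q$ for all $Q\sqsubset Y$, $d:B\to Y$. A monoidal refinement system is a strict monoidal functor between monoidal categories; ''enough pushforwards'' means the pushforwards $p_!(P\otimes Q)$ exist; the fiberwise tensor is $P\otimes_WQ:=p_!(P\otimes Q)$. For $B\in\mathcal T$: $B^{+}$ has objects $(P,c)$, $P\sqsubset X$, $c:X\to B$, morphisms $(P_1,c_1)\to(P_2,c_2)$ the derivations of $P_1\Rightarrow_eP_2$ with $c_1=e;c_2$; $B^{-}$ is the opposite of the category with objects $(d,R)$, $d:B\to Y$, $R\sqsubset Y$, morphisms $(d_1,R_1)\to(d_2,R_2)$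 the derivations of $R_1\Rightarrow_eR_2$ with $d_1;e=d_2$. For $Q\sqsubset B$, $Q^{+}:(B^{+})^{op}\to\mathbf{Set}$ sends $(P,c)$ to the set of derivations of $P\Rightarrow_cQ$, acting by precomposition. $W^{+}$ is monoidal via $((P_1,c_1),(P_2,c_2))\mapsto(P_1\otimes P_2,(c_1\otimes c_2);p)$, and for presheaves $\phi,\psi$ on $W^{+}$ the Day tensor is $(\phi\otimes_{W^{+}}\psi)(z)=\int^{x,y}W^{+}(z,x\otimes y)\times\phi(x)\times\psi(y)$. $\mathrm{Jdg}(\mathbf t)$ has objects $(P,c,R)$ and morphisms $(P_1,c_1,R_1)\to(P_2,c_2,R_2)$ pairs of derivations $\beta$ of $P_1\Rightarrow_eP_2$, $\gamma$ of $R_2\Rightarrow_{e'}R_1$ with $c_1=e;c_2;e'$; $\mathrm{Der}$ sends $(P,c,R)$ to the set of derivations of $P\Rightarrow_cR$ and $(\beta,\gamma)$ to $\alpha\mapsto\beta;\alpha;\gamma$. Bracket $\langle-\mid-\rangle_W:W^{+}\times W^{-}\to\mathrm{Jdg}(\mathbf t)$: $((P,c),(d,R))\mapsto(P,c;d,R)$. Duals with respect to $W$: for $\phi$ on $W^{+}$, $\phi^{\perp}(y)=$ the set of natural transformations $\phi\Rightarrow\mathrm{Der}(\langle-\mid y\rangle_W)$ (presheaf on $W^{-}$); for $\psi$ on $W^{-}$, ${}^{\perp}\psi(x)=$ the set of natural transformations $\psi\Rightarrow\mathrm{Der}(\langle x\mid-\rangle_W)$ (presheaf on $W^{+}$). 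*)

From Stdlib Require Import ClassicalEpsilon ProofIrrelevance Relation_Operators.

Set Implicit Arguments.
Unset Strict Implicit.

Record Cat := {
  ob :> Type;
  hom : ob -> ob -> Type;
  idm : forall a, hom a a;
  comp : forall a b c, hom a b -> hom b c -> hom a c;
  comp_idl : forall a b (f : hom a b), comp (idm a) f = f;
  comp_idr : forall a b (f : hom a b), comp f (idm b) = f;
  comp_assoc : forall a b c d (f : hom a b) (g : hom b c) (h : hom c d),
      comp (comp f g) h = comp f (comp g h)
}.
Arguments hom {_} _ _.
Arguments idm {_} _.
Arguments comp {_ _ _ _} _ _.
Notation "f ;; g" := (comp f g) (at level 40, left associativity).

Definition eqhom (C : Cat) (a b : C) (e : a = b) : hom a b :=
  match e in _ = b' return hom a b' with eq_refl => idm a end.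
Arguments eqhom {C a b} e.

Record MonCat := {
  mcat :> Cat;
  ten : mcat -> mcat -> mcat;
  tenm : forall a b c d : mcat, hom a b -> hom c d -> hom (ten a c) (ten b d);
  tunit : mcat;
  tenm_id : forall a b : mcat, tenm (idm a) (idm b) = idm (ten a b);
  tenm_comp : forall (a1 b1 c1 a2 b2 c2 : mcat) (f1 : hom a1 b1) (g1 : hom b1 c1)
      (f2 : hom a2 b2) (g2 : hom b2 c2),
      tenm (f1 ;; g1) (f2 ;; g2) = tenm f1 f2 ;; tenm g1 g2;
  assoc : forall a b c : mcat, hom (ten (ten a b) c) (ten a (ten b c));
  assoc_inv : forall a b c : mcat, hom (ten a (ten b c)) (ten (ten a b) c);
  assoc_iso1 : forall a b c, assoc a b c ;; assoc_inv a b c = idm _;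
  assoc_iso2 : forall a b c, assoc_inv a b c ;; assoc a b c = idm _;
  assoc_nat : forall (a a' b b' c c' : mcat) (f : hom a a') (g : hom b b') (h : hom c c'),
      tenm (tenm f g) h ;; assoc a' b' c' = assoc a b c ;; tenm f (tenm g h);
  lunit : forall a : mcat, hom (ten tunit a) a;
  lunit_inv : forall a : mcat, hom a (ten tunit a);
  lunit_iso1 : forall a, lunit a ;; lunit_inv a = idm _;
  lunit_iso2 : forall a, lunit_inv a ;; lunit a = idm _;
  lunit_nat : forall (a a' : mcat) (f : hom a a'),
      tenm (idm tunit) f ;; lunit a' = lunit a ;; f;
  runit : forall a : mcat, hom (ten a tunit) a;
  runit_inv : forall a : mcat, hom a (ten a tunit);
  runit_iso1 : forall a, runit a ;; runit_inv a = idm _;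
  runit_iso2 : forall a, runit_inv a ;; runit a = idm _;
  runit_nat : forall (a a' : mcat) (f : hom a a'),
      tenm f (idm tunit) ;; runit a' = runit a ;; f;
  pentagon : forall a b c d : mcat,
      tenm (assoc a b c) (idm d) ;; assoc a (ten b c) d ;; tenm (idm a) (assoc b c d)
      = assoc (ten a b) c d ;; assoc a b (ten c d);
  triangle : forall a b : mcat,
      assoc a tunit b ;; tenm (idm a) (lunit b) = tenm (runit a) (idm b)
}.
Arguments ten {_} _ _.
Arguments tenm {_ _ _ _ _} _ _.
Arguments assoc {_} _ _ _.
Arguments lunit {_} _.
Arguments runit {_} _.

Record SMFunctor (C D : MonCat) := {
  fob : C -> D;
  fmap : forall a b : C, hom a b -> hom (fob a) (fob b);
  fmap_id : forall a, fmap (idm a) = idm (fob a);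
  fmap_comp : forall (a b c : C) (f : hom a b) (g : hom b c),
      fmap (f ;; g) = fmap f ;; fmap g;
  ften : forall a b : C, fob (ten a b) = ten (fob a) (fob b);
  funit : fob (tunit C) = tunit D;
  fmap_ten : forall (a b c d : C) (f : hom a b) (g : hom c d),
      fmap (tenm f g) ;; eqhom (ften b d) = eqhom (ften a c) ;; tenm (fmap f) (fmap g);
  fmap_assoc : forall a b c : C,
      fmap (assoc a b c) ;; eqhom (ften a (ten b c)) ;; tenm (idm (fob a)) (eqhom (ften b c))
      = eqhom (ften (ten a b) c) ;; tenm (eqhom (ften a b)) (idm (fob c))
        ;; assoc (fob a) (fob b) (fob c);
  fmap_lunit : forall a : C,
      fmap (lunit a) = eqhom (ften (tunit C) a) ;; tenm (eqhom funit) (idm (fob a)) ;; lunit (fob a);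
  fmap_runit : forall a : C,
      fmap (runit a) = eqhom (ften a (tunit C)) ;; tenm (idm (fob a)) (eqhom funit) ;; runit (fob a)
}.
Arguments fmap {_ _} _ {_ _} _.

Record Monoid (T : MonCat) := {
  mW : T;
  mmul : hom (ten mW mW) mW;
  munit : hom (tunit T) mW;
  mon_assoc : tenm mmul (idm mW) ;; mmul = assoc mW mW mW ;; tenm (idm mW) mmul ;; mmul;
  mon_lunit : tenm munit (idm mW) ;; mmul = lunit mW;
  mon_runit : tenm (idm mW) munit ;; mmul = runit mW
}.

Definition bijective (X Y : Type) (f : X -> Y) : Prop :=
  exists g : Y -> X, (forall x, g (f x) = x) /\ (forall y, f (g y) = y).

Section Refinement.
Context {D T : MonCat} (t : SMFunctor D T).

(* P ⊏ A is encoded by an equality  eP : fob t P = A .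
   A derivation of P =>_c Q (P ⊏ A, Q ⊏ B, c : A -> B) is a morphism
   alpha : P -> Q with t(alpha) = c (modulo the object equalities). *)
Definition Deriv (P Q : D) (A B : T) (eP : fob t P = A) (eQ : fob t Q = B) (c : hom A B) :=
  {alpha : hom P Q | fmap t alpha ;; eqhom eQ = eqhom eP ;; c}.

Definition is_pushforward (P : D) (A B : T) (eP : fob t P = A) (c : hom A B)
    (R : D) (eR : fob t R = B) (kappa : hom P R) : Prop :=
  fmap t kappa ;; eqhom eR = eqhom eP ;; c /\
  forall (Q : D) (Y : T) (eQ : fob t Q = Y) (d : hom B Y) (gam : hom P Q),
    fmap t gam ;; eqhom eQ = eqhom eP ;; (c ;; d) ->
    exists! beta : hom R Q,
      fmap t beta ;; eqhom eQ = eqhom eR ;; d /\ gam = kappa ;; beta.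

Definition ten_over (P Q : D) (A B : T) (eP : fob t P = A) (eQ : fob t Q = B)
  : fob t (ten P Q) = ten A B :=
  eq_trans (ften t P Q) (f_equal2 ten eP eQ).

Definition enough_pushforwards : Prop :=
  forall (P Q : D) (A B C : T) (eP : fob t P = A) (eQ : fob t Q = B) (p : hom (ten A B) C),
  exists (R : D) (eR : fob t R = C) (kappa : hom (ten P Q) R),
    is_pushforward (ten_over eP eQ) p eR kappa.

Record jdg_ob := Jdg { jP : D; jR : D; jc : hom (fob t jP) (fob t jR) }.
Definition jdg_hom (j1 j2 : jdg_ob) :=
  {bg : hom (jP j1) (jP j2) * hom (jR j2) (jR j1) |
     jc j1 = fmap t (fst bg) ;; jc j2 ;; fmap t (snd bg)}.
Definition Der (j : jdg_ob) := {alpha : hom (jP j) (jR j) | fmap t alpha = jc j}.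

Lemma der_act_proof (j1 j2 : jdg_ob) (m : jdg_hom j1 j2) (a : Der j2) :
  fmap t (fst (proj1_sig m) ;; proj1_sig a ;; snd (proj1_sig m)) = jc j1.
Proof.
  destruct m as [[b g] Hm]; destruct a as [a Ha]; simpl in *.
  rewrite !fmap_comp, Ha; symmetry; exact Hm.
Qed.

Definition der_act (j1 j2 : jdg_ob) (m : jdg_hom j1 j2) (a : Der j2) : Der j1 :=
  exist _ (fst (proj1_sig m) ;; proj1_sig a ;; snd (proj1_sig m)) (der_act_proof m a).

Lemma der_eq (j : jdg_ob) (a b : Der j) : proj1_sig a = proj1_sig b -> a = b.
Proof.
  destruct a, b; simpl; intros ->; f_equal; apply proof_irrelevance.
Qed.

Section Plus.
Context (B : T).

(* objects of B^+ : (P, c) with P ⊏ X, c : X -> B  (X is necessarily t P) *)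
Record plus_ob := PlusOb { pP : D; pc : hom (fob t pP) B }.
Definition plus_hom (x y : plus_ob) :=
  {alpha : hom (pP x) (pP y) | pc x = fmap t alpha ;; pc y}.

Lemma plus_id_proof (x : plus_ob) : pc x = fmap t (idm (pP x)) ;; pc x.
Proof. rewrite fmap_id, comp_idl; reflexivity. Qed.
Definition plus_id (x : plus_ob) : plus_hom x x := exist _ _ (plus_id_proof x).

Lemma plus_comp_proof (x y z : plus_ob) (f : plus_hom x y) (g : plus_hom y z) :
  pc x = fmap t (proj1_sig f ;; proj1_sig g) ;; pc z.
Proof.
  destruct f as [f Hf], g as [g Hg]; simpl.
  rewrite fmap_comp, comp_assoc, <- Hg; exact Hf.
Qed.
Definition plus_comp (x y z : plus_ob) (f : plus_hom x y) (g : plus_hom y z) : plus_hom x z :=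
  exist _ _ (plus_comp_proof f g).

(* objects of B^- : (d, R) with d : B -> Y, R ⊏ Y  (Y is necessarily t R).
   B^- is the opposite of the category of such pairs; a morphism y1 -> y2 in
   B^- is a derivation R2 =>_e R1 with d2 ; e = d1. *)
Record minus_ob := MinusOb { mR : D; md : hom B (fob t mR) }.
Definition minus_hom (y1 y2 : minus_ob) :=
  {gam : hom (mR y2) (mR y1) | md y2 ;; fmap t gam = md y1}.

Lemma minus_id_proof (y : minus_ob) : md y ;; fmap t (idm (mR y)) = md y.
Proof. rewrite fmap_id, comp_idr; reflexivity. Qed.
Definition minus_id (y : minus_ob) : minus_hom y y := exist _ _ (minus_id_proof y).

Record PshPlus := { ppob : plus_ob -> Type;
                    ppact : forall x y : plus_ob, plus_hom x y -> ppob y -> ppob x }.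
Record PshMinus := { pmob : minus_ob -> Type;
                     pmact : forall y1 y2 : minus_ob, minus_hom y1 y2 -> pmob y2 -> pmob y1 }.
Arguments ppact p {x y} _ _.
Arguments pmact p {y1 y2} _ _.

Definition NatPlus (F G : PshPlus) :=
  {eta : forall x, ppob F x -> ppob G x |
     forall x y (f : plus_hom x y) (a : ppob F y),
       eta x (ppact F f a) = ppact G f (eta y a)}.
Definition NatMinus (F G : PshMinus) :=
  {eta : forall y, pmob F y -> pmob G y |
     forall y1 y2 (g : minus_hom y1 y2) (a : pmob F y2),
       eta y1 (pmact F g a) = pmact G g (eta y2 a)}.

Definition natiso_plus (F G : PshPlus) : Prop :=
  exists eta : NatPlus F G, forall x, bijective (proj1_sig eta x).

Lemma plus_psh_proof (Q : D) (eQ : fob t Q = B) (x y : plus_ob) (f : plus_hom x y)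
  (a : Deriv eq_refl eQ (pc y)) :
  fmap t (proj1_sig f ;; proj1_sig a) ;; eqhom eQ = eqhom eq_refl ;; pc x.
Proof.
  destruct f as [f Hf], a as [a Ha]; simpl in *.
  rewrite fmap_comp, comp_assoc, Ha, comp_idl, comp_idl; symmetry; exact Hf.
Qed.

Definition plus_psh (Q : D) (eQ : fob t Q = B) : PshPlus :=
  {| ppob x := Deriv (P := pP x) eq_refl eQ (pc x);
     ppact x y f a := exist _ (proj1_sig f ;; proj1_sig a) (plus_psh_proof f a) |}.

Definition brk (x : plus_ob) (y : minus_ob) : jdg_ob := Jdg (pc x ;; md y).

Lemma brk_hom_proof x x' y y' (f : plus_hom x x') (g : minus_hom y y') :
  jc (brk x y) = fmap t (proj1_sig f) ;; jc (brk x' y') ;; fmap t (proj1_sig g).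
Proof.
  destruct f as [f Hf], g as [g Hg]; simpl.
  rewrite Hf, <- Hg, !comp_assoc; reflexivity.
Qed.
Definition brk_hom x x' y y' (f : plus_hom x x') (g : minus_hom y y')
  : jdg_hom (brk x y) (brk x' y') :=
  exist _ (proj1_sig f, proj1_sig g) (brk_hom_proof f g).

Definition DerL (y : minus_ob) : PshPlus :=
  {| ppob x := Der (brk x y);
     ppact x x' f := der_act (brk_hom f (minus_id y)) |}.
Definition DerR (x : plus_ob) : PshMinus :=
  {| pmob y := Der (brk x y);
     pmact y1 y2 g := der_act (brk_hom (plus_id x) g) |}.

Lemma perp_r_proof (phi : PshPlus) (y1 y2 : minus_ob) (g : minus_hom y1 y2)
  (eta : NatPlus phi (DerL y2)) :
  forall x x' (f : plus_hom x x') (a : ppob phi x'),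
    der_act (brk_hom (plus_id x) g) (proj1_sig eta x (ppact phi f a))
    = ppact (DerL y1) f (der_act (brk_hom (plus_id x') g) (proj1_sig eta x' a)).
Proof.
  intros x x' f a. destruct eta as [eta Heta]; simpl. rewrite Heta.
  apply der_eq; simpl. rewrite !comp_idl, !comp_idr, !comp_assoc. reflexivity.
Qed.

Definition perp_r (phi : PshPlus) : PshMinus :=
  {| pmob y := NatPlus phi (DerL y);
     pmact y1 y2 g eta :=
       exist _ (fun x a => der_act (brk_hom (plus_id x) g) (proj1_sig eta x a))
               (perp_r_proof g eta) |}.

Lemma perp_l_proof (psi : PshMinus) (x x' : plus_ob) (f : plus_hom x x')
  (eta : NatMinus psi (DerR x')) :
  forall y1 y2 (g : minus_hom y1 y2) (b : pmob psi y2),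
    der_act (brk_hom f (minus_id y1)) (proj1_sig eta y1 (pmact psi g b))
    = pmact (DerR x) g (der_act (brk_hom f (minus_id y2)) (proj1_sig eta y2 b)).
Proof.
  intros y1 y2 g b. destruct eta as [eta Heta]; simpl. rewrite Heta.
  apply der_eq; simpl. rewrite !comp_idl, !comp_idr, !comp_assoc. reflexivity.
Qed.

Definition perp_l (psi : PshMinus) : PshPlus :=
  {| ppob x := NatMinus psi (DerR x);
     ppact x x' f eta :=
       exist _ (fun y b => der_act (brk_hom f (minus_id y)) (proj1_sig eta y b))
               (perp_l_proof f eta) |}.

Section Day.
Context (p : hom (ten B B) B).

Definition plus_ten (x y : plus_ob) : plus_ob :=
  PlusOb (eqhom (ften t (pP x) (pP y)) ;; tenm (pc x) (pc y) ;; p).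

Lemma plus_tenm_proof x x' y y' (f : plus_hom x x') (g : plus_hom y y') :
  pc (plus_ten x y) = fmap t (tenm (proj1_sig f) (proj1_sig g)) ;; pc (plus_ten x' y').
Proof.
  destruct f as [f Hf], g as [g Hg]; simpl.
  rewrite <- !comp_assoc, (fmap_ten t f g).
  rewrite (comp_assoc _ (tenm (fmap t f) (fmap t g))), <- tenm_comp, <- Hf, <- Hg.
  reflexivity.
Qed.
Definition plus_tenm x x' y y' (f : plus_hom x x') (g : plus_hom y y')
  : plus_hom (plus_ten x y) (plus_ten x' y') :=
  exist _ _ (plus_tenm_proof f g).

Section DayTensor.
Context (phi psi : PshPlus).

Inductive DayEl (z : plus_ob) : Type :=
  mkDay (x y : plus_ob) (h : plus_hom z (plus_ten x y)) (a : ppob phi x) (b : ppob psi y).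

(* generating relation of the coend  \int^{x,y} B^+(z, x ⊗ y) × phi x × psi y *)
Inductive DayRel (z : plus_ob) : DayEl z -> DayEl z -> Prop :=
  day_rel : forall x x' y y' (f : plus_hom x x') (g : plus_hom y y')
              (h : plus_hom z (plus_ten x y)) (a : ppob phi x') (b : ppob psi y'),
    DayRel (mkDay h (ppact phi f a) (ppact psi g b))
           (mkDay (plus_comp h (plus_tenm f g)) a b).

Definition DayCls (z : plus_ob) := clos_refl_sym_trans (DayEl z) (@DayRel z).

Definition DayOb (z : plus_ob) := {S : DayEl z -> Prop | exists e, S = DayCls e}.

Definition day_act0 (z' z : plus_ob) (k : plus_hom z' z) (e : DayEl z) : DayEl z' :=
  match e with mkDay h a b => mkDay (plus_comp k h) a b end.

Definition day_act (z' z : plus_ob) (k : plus_hom z' z) (S : DayOb z) : DayOb z' :=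
  let e := proj1_sig (constructive_indefinite_description _ (proj2_sig S)) in
  exist _ (DayCls (day_act0 k e)) (ex_intro _ _ eq_refl).

Definition day : PshPlus := {| ppob := DayOb; ppact := day_act |}.

End DayTensor.
End Day.
End Plus.
End Refinement.

(* The Day tensor P^+ ⊗ Q^+ of two representable presheaves is generated by
   the single element (id, id_P, id_Q) over (P ⊗ Q, p), so an element of its
   dual at (d, R') is determined by one derivation of P ⊗ Q ⇒_{p;d} R'; by the
   universal property of the pushforward kappa : P ⊗ Q → R = p_!(P ⊗ Q) this is
   the same as a derivation of R ⇒_d R'.  Hence (P^+ ⊗ Q^+)^⊥ is the dual of
   the representable R^+, and taking the dual once more returns R^+: a ∈ R^+(x)
   goes to the family of composites a ; beta, and a natural family goes back to
   its value on the element (id_W, R) of the dual given by kappa itself. *)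

From Stdlib Require Import ClassicalEpsilon ProofIrrelevance Relation_Operators
  FunctionalExtensionality PropExtensionality.
Set Implicit Arguments.

Lemma eqhom_trans (C : Cat) (a b c : C) (e1 : a = b) (e2 : b = c) :
  eqhom (eq_trans e1 e2) = eqhom e1 ;; eqhom e2.
Proof. destruct e2; simpl; rewrite comp_idr; reflexivity. Qed.

Lemma eqhom_ten (C : MonCat) (a b c d : C) (e1 : a = b) (e2 : c = d) :
  eqhom (f_equal2 ten e1 e2) = tenm (eqhom e1) (eqhom e2).
Proof.
  destruct e1, e2; rewrite (proof_irrelevance _ (f_equal2 ten eq_refl eq_refl) eq_refl).
  exact (eq_sym (tenm_id _ _)).
Qed.

Lemma sig_eq (X : Type) (Pr : X -> Prop) (a b : {x | Pr x}) :
  proj1_sig a = proj1_sig b -> a = b.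
Proof. destruct a, b; simpl; intros ->; f_equal; apply proof_irrelevance. Qed.

Lemma clos_rst_class_eq (X : Type) (r : X -> X -> Prop) (a b : X) :
  clos_refl_sym_trans X r a b -> clos_refl_sym_trans X r a = clos_refl_sym_trans X r b.
Proof.
  intros Hab; apply functional_extensionality; intro c.
  apply propositional_extensionality; split; intro H.
  - eapply rst_trans; [apply rst_sym; exact Hab | exact H].
  - eapply rst_trans; [exact Hab | exact H].
Qed.

Lemma clos_rst_invariant (X Y : Type) (r : X -> X -> Prop) (F : X -> Y) :
  (forall a b, r a b -> F a = F b) ->
  forall a b, clos_refl_sym_trans X r a b -> F a = F b.
Proof. intros HF a b H; induction H; auto; congruence. Qed.

Section DayRepresentatives.
Context {D T : MonCat} {t : SMFunctor D T} {B : T} (p : hom (ten B B) B)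
  (phi psi : PshPlus t B).

Definition day_rep (z : plus_ob t B) (S : ppob (day p phi psi) z) : DayEl p phi psi z :=
  proj1_sig (constructive_indefinite_description _ (proj2_sig S)).

Lemma day_rep_spec (z : plus_ob t B) (S : ppob (day p phi psi) z) :
  proj1_sig S = DayCls (day_rep S).
Proof. unfold day_rep; destruct (constructive_indefinite_description _ _); assumption. Qed.

Lemma day_act0_cls (z' z : plus_ob t B) (k : plus_hom z' z) (e e' : DayEl p phi psi z) :
  DayCls e e' -> DayCls (day_act0 k e) (day_act0 k e').
Proof.
  induction 1 as [e e' [x x' y y' f g h a b] | | |].
  - apply rst_step; simpl.
    replace (plus_comp k (plus_comp h (plus_tenm p f g)))
      with (plus_comp (plus_comp k h) (plus_tenm p f g)); [constructor |].
    apply sig_eq, comp_assoc.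
  - apply rst_refl.
  - apply rst_sym; assumption.
  - eapply rst_trans; eassumption.
Qed.

End DayRepresentatives.

Section Representables.
Context {D T : MonCat} {t : SMFunctor D T} {B : T} {Q : D} (eQ : fob t Q = B).

Definition plus_gen_ob : plus_ob t B := PlusOb (eqhom eQ).

Lemma plus_psh_over (x : plus_ob t B) (a : ppob (plus_psh eQ) x) :
  fmap t (proj1_sig a) ;; eqhom eQ = pc x.
Proof. destruct a as [a Ha]; simpl in *; rewrite Ha, comp_idl; reflexivity. Qed.

Lemma plus_psh_unit_over :
  fmap t (idm Q) ;; eqhom eQ = eqhom (eq_refl : fob t Q = fob t Q) ;; pc plus_gen_ob.
Proof. simpl; rewrite fmap_id, !comp_idl; reflexivity. Qed.

Definition plus_psh_unit : ppob (plus_psh eQ) plus_gen_ob := exist _ (idm Q) plus_psh_unit_over.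

Definition plus_psh_hom (x : plus_ob t B) (a : ppob (plus_psh eQ) x) : plus_hom x plus_gen_ob :=
  exist _ (proj1_sig a) (eq_sym (plus_psh_over a)).

Lemma plus_psh_yoneda (x : plus_ob t B) (a : ppob (plus_psh eQ) x) :
  a = ppact (p := plus_psh eQ) (plus_psh_hom a) plus_psh_unit.
Proof. apply sig_eq; symmetry; apply comp_idr. Qed.

End Representables.

Section DayOfRepresentables.
Context {D T : MonCat} {t : SMFunctor D T} {B : T} (p : hom (ten B B) B)
  {P Q : D} (eP : fob t P = B) (eQ : fob t Q = B).

Local Notation PHI := (day p (plus_psh eP) (plus_psh eQ)).

Definition day_gen_ob : plus_ob t B := plus_ten p (plus_gen_ob eP) (plus_gen_ob eQ).

Lemma pc_day_gen_ob : pc day_gen_ob = eqhom (ten_over eP eQ) ;; p.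
Proof. unfold ten_over; rewrite eqhom_trans, eqhom_ten; reflexivity. Qed.

Definition day_gen_rep : DayEl p (plus_psh eP) (plus_psh eQ) day_gen_ob :=
  mkDay (plus_id day_gen_ob) (plus_psh_unit eP) (plus_psh_unit eQ).

Definition day_gen : ppob PHI day_gen_ob := exist _ (DayCls day_gen_rep) (ex_intro _ _ eq_refl).

Definition day_el_hom (z : plus_ob t B) (e : DayEl p (plus_psh eP) (plus_psh eQ) z) :
  plus_hom z day_gen_ob :=
  match e with mkDay h a b => plus_comp h (plus_tenm p (plus_psh_hom a) (plus_psh_hom b)) end.

Lemma day_el_hom_rel (z : plus_ob t B) (e e' : DayEl p (plus_psh eP) (plus_psh eQ) z) :
  DayRel e e' -> proj1_sig (day_el_hom e) = proj1_sig (day_el_hom e').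
Proof. destruct 1; simpl; rewrite tenm_comp, !comp_assoc; reflexivity. Qed.

Lemma day_generated (z : plus_ob t B) (S : ppob PHI z) :
  exists k : plus_hom z day_gen_ob, S = ppact (p := PHI) k day_gen.
Proof.
  destruct (day_rep S) as [x y h a b] eqn:Erep.
  set (k := day_el_hom (mkDay h a b)); exists k.
  assert (Hgen : DayCls day_gen_rep (day_rep day_gen)).
  { change (proj1_sig day_gen (day_rep day_gen)); rewrite (day_rep_spec day_gen).
    apply rst_refl. }
  apply sig_eq; rewrite (day_rep_spec S), Erep.
  change (DayCls (mkDay h a b) = DayCls (day_act0 k (day_rep day_gen))).
  apply clos_rst_class_eq.
  eapply rst_trans; [| apply day_act0_cls, Hgen].
  (* Yoneda: the coend relation moves a and b into the first component. *)
  rewrite (plus_psh_yoneda a), (plus_psh_yoneda b) at 1.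
  replace (day_act0 k day_gen_rep) with (mkDay k (plus_psh_unit eP) (plus_psh_unit eQ));
    [apply rst_step; constructor |].
  simpl; f_equal; apply sig_eq; symmetry; apply comp_idr.
Qed.

Definition day_hom (z : plus_ob t B) (S : ppob PHI z) : hom (pP z) (pP day_gen_ob) :=
  proj1_sig (day_el_hom (day_rep S)).

Lemma day_hom_cls (z : plus_ob t B) (S : ppob PHI z) e :
  proj1_sig S = DayCls e -> day_hom S = proj1_sig (day_el_hom e).
Proof.
  intro HS; apply (clos_rst_invariant _ (@day_el_hom_rel z)).
  assert (E : DayCls (day_rep S) = DayCls e) by (rewrite <- day_rep_spec; exact HS).
  change (DayCls (day_rep S) e); rewrite E; apply rst_refl.
Qed.

Lemma day_hom_act (z' z : plus_ob t B) (k : plus_hom z' z) (S : ppob PHI z) :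
  day_hom (ppact (p := PHI) k S) = proj1_sig k ;; day_hom S.
Proof.
  rewrite (@day_hom_cls _ _ (day_act0 k (day_rep S))) by reflexivity.
  unfold day_hom; destruct (day_rep S); apply comp_assoc.
Qed.

Lemma day_hom_over (z : plus_ob t B) (S : ppob PHI z) :
  pc z = fmap t (day_hom S) ;; pc day_gen_ob.
Proof. exact (proj2_sig (day_el_hom (day_rep S))). Qed.

Lemma day_hom_gen : day_hom day_gen = idm _.
Proof.
  rewrite (@day_hom_cls _ _ day_gen_rep) by reflexivity; simpl.
  rewrite tenm_id; apply comp_idl.
Qed.

Lemma perp_ext (y : minus_ob t B) (z z' : pmob (perp_r PHI) y) :
  proj1_sig (proj1_sig z day_gen_ob day_gen) = proj1_sig (proj1_sig z' day_gen_ob day_gen) ->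
  z = z'.
Proof.
  intro Hgen; apply sig_eq.
  apply functional_extensionality_dep; intro x.
  apply functional_extensionality_dep; intro S.
  destruct (day_generated S) as [k ->].
  rewrite (proj2_sig z), (proj2_sig z'); apply der_eq.
  destruct (proj1_sig z day_gen_ob day_gen), (proj1_sig z' day_gen_ob day_gen).
  simpl in *; subst; reflexivity.
Qed.

End DayOfRepresentables.

Section BidualOfPushforward.
Context {D T : MonCat} {t : SMFunctor D T} {P Q R : D}
  (p : hom (ten (fob t R) (fob t R)) (fob t R))
  (eP : fob t P = fob t R) (eQ : fob t Q = fob t R) (kappa : hom (ten P Q) R).
Hypothesis kappa_pushforward : is_pushforward (ten_over eP eQ) p eq_refl kappa.

Local Notation W := (fob t R).
Local Notation PHI := (day p (plus_psh eP) (plus_psh eQ)).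
Local Notation z0 := (day_gen_ob p eP eQ).
Local Notation S0 := (day_gen p eP eQ).

Lemma fmap_kappa : fmap t kappa = eqhom (ten_over eP eQ) ;; p.
Proof. rewrite <- (comp_idr (fmap t kappa)); exact (proj1 kappa_pushforward). Qed.

Lemma kappa_factor {Y : D} (d : hom W (fob t Y)) (gam : hom (ten P Q) Y) :
  fmap t gam = eqhom (ten_over eP eQ) ;; (p ;; d) ->
  exists beta : hom R Y, fmap t beta = d /\ gam = kappa ;; beta.
Proof.
  intro Hgam.
  destruct (proj2 kappa_pushforward Y (fob t Y) eq_refl d gam) as [b [[Hb Hbk] _]].
  - simpl; rewrite comp_idr; exact Hgam.
  - exists b; simpl in Hb; rewrite comp_idr, comp_idl in Hb; split; assumption.
Qed.

Lemma kappa_cancel {Y : D} (b1 b2 : hom R Y) :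
  fmap t b1 = fmap t b2 -> kappa ;; b1 = kappa ;; b2 -> b1 = b2.
Proof.
  intros Ht Hk.
  destruct (proj2 kappa_pushforward Y (fob t Y) eq_refl (fmap t b2) (kappa ;; b1))
    as [b [_ Hu]].
  - simpl; rewrite !comp_idr, fmap_comp, fmap_kappa, Ht, comp_assoc; reflexivity.
  - rewrite <- (Hu b1), <- (Hu b2); simpl; rewrite ?comp_idr, ?comp_idl; auto.
Qed.

Lemma perp_at_gen (y : minus_ob t W) (z : pmob (perp_r PHI) y) :
  fmap t (proj1_sig (proj1_sig z z0 S0)) = eqhom (ten_over eP eQ) ;; (p ;; md y).
Proof.
  destruct (proj1_sig z z0 S0) as [d Hd]; cbn [proj1_sig jc brk] in *.
  rewrite Hd, pc_day_gen_ob, comp_assoc; reflexivity.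
Qed.

Definition perp_factor (y : minus_ob t W) (z : pmob (perp_r PHI) y) : hom R (mR y) :=
  proj1_sig (constructive_indefinite_description _
    (kappa_factor _ _ (perp_at_gen z))).

Lemma fmap_perp_factor (y : minus_ob t W) (z : pmob (perp_r PHI) y) :
  fmap t (perp_factor z) = md y.
Proof.
  unfold perp_factor; destruct (constructive_indefinite_description _ _) as [b [Hb Hbk]].
  exact Hb.
Qed.

Lemma perp_factor_spec (y : minus_ob t W) (z : pmob (perp_r PHI) y) :
  proj1_sig (proj1_sig z z0 S0) = kappa ;; perp_factor z.
Proof.
  unfold perp_factor; destruct (constructive_indefinite_description _ _) as [b [Hb Hbk]].
  exact Hbk.
Qed.

Lemma perp_factor_act (y1 y2 : minus_ob t W) (g : minus_hom y1 y2) (z : pmob (perp_r PHI) y2) :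
  perp_factor (pmact (p := perp_r PHI) g z) = perp_factor z ;; proj1_sig g.
Proof.
  apply kappa_cancel.
  - rewrite fmap_comp, !fmap_perp_factor; exact (eq_sym (proj2_sig g)).
  - rewrite <- comp_assoc, <- !perp_factor_spec; simpl; rewrite comp_idl; reflexivity.
Qed.

Definition unit_minus_ob : minus_ob t W := MinusOb (idm W).

Lemma kappa_perp_over (z : plus_ob t W) (S : ppob PHI z) :
  fmap t (day_hom S ;; kappa) = jc (brk z unit_minus_ob).
Proof.
  simpl; rewrite comp_idr, fmap_comp, fmap_kappa, <- pc_day_gen_ob.
  symmetry; apply day_hom_over.
Qed.

Lemma kappa_perp_natural (z' z : plus_ob t W) (k : plus_hom z' z) (S : ppob PHI z) :
  exist _ _ (kappa_perp_over (ppact (p := PHI) k S))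
  = ppact (p := DerL unit_minus_ob) k (exist _ _ (kappa_perp_over S)).
Proof.
  apply der_eq; cbn [proj1_sig der_act ppact DerL brk_hom fst snd minus_id].
  rewrite day_hom_act, comp_idr, comp_assoc; reflexivity.
Qed.

Definition kappa_perp : pmob (perp_r PHI) unit_minus_ob :=
  exist _ (fun z S => exist _ _ (kappa_perp_over S)) kappa_perp_natural.

Lemma kappa_perp_gen : proj1_sig (proj1_sig kappa_perp z0 S0) = kappa.
Proof. cbn [proj1_sig kappa_perp]; rewrite day_hom_gen; apply comp_idl. Qed.

Lemma perp_factor_kappa_perp : perp_factor kappa_perp = idm R.
Proof.
  apply kappa_cancel.
  - rewrite fmap_perp_factor, fmap_id; reflexivity.
  - rewrite <- perp_factor_spec, kappa_perp_gen; symmetry; apply comp_idr.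
Qed.

Lemma perp_factor_hom_proof (y : minus_ob t W) (z : pmob (perp_r PHI) y) :
  md unit_minus_ob ;; fmap t (perp_factor z) = md y.
Proof. simpl; rewrite comp_idl; apply fmap_perp_factor. Qed.

Definition perp_factor_hom (y : minus_ob t W) (z : pmob (perp_r PHI) y) :
  minus_hom y unit_minus_ob := exist _ _ (perp_factor_hom_proof z).

Lemma perp_kappa_perp_act (y : minus_ob t W) (z : pmob (perp_r PHI) y) :
  pmact (p := perp_r PHI) (perp_factor_hom z) kappa_perp = z.
Proof.
  apply perp_ext; rewrite (perp_factor_spec z).
  cbn [proj1_sig pmact perp_r der_act brk_hom fst snd plus_id].
  rewrite kappa_perp_gen, comp_idl; reflexivity.
Qed.

Local Notation RP := (plus_psh (eq_refl : W = W)).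
Local Notation BIDUAL := (perp_l (perp_r PHI)).

Lemma fmap_plus_psh_refl (x : plus_ob t W) (a : ppob RP x) : fmap t (proj1_sig a) = pc x.
Proof. rewrite <- (plus_psh_over a); symmetry; apply comp_idr. Qed.

Lemma to_bidual_over (x : plus_ob t W) (a : ppob RP x) (y : minus_ob t W)
  (z : pmob (perp_r PHI) y) :
  fmap t (proj1_sig a ;; perp_factor z) = jc (brk x y).
Proof.
  rewrite fmap_comp, fmap_perp_factor, fmap_plus_psh_refl; reflexivity.
Qed.

Lemma to_bidual_natural_minus (x : plus_ob t W) (a : ppob RP x)
  (y1 y2 : minus_ob t W) (g : minus_hom y1 y2) (z : pmob (perp_r PHI) y2) :
  exist _ _ (to_bidual_over a (pmact (p := perp_r PHI) g z))
  = pmact (p := DerR x) g (exist _ _ (to_bidual_over a z)).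
Proof.
  apply der_eq; cbn [proj1_sig pmact DerR der_act brk_hom fst snd plus_id].
  rewrite perp_factor_act, (@comp_idl (mcat D)), comp_assoc; reflexivity.
Qed.

Definition to_bidual (x : plus_ob t W) (a : ppob RP x) : ppob BIDUAL x :=
  exist _ (fun y z => exist _ _ (to_bidual_over a z)) (to_bidual_natural_minus a).

Lemma to_bidual_natural (x x' : plus_ob t W) (f : plus_hom x x') (a : ppob RP x') :
  to_bidual (ppact (p := RP) f a) = ppact (p := BIDUAL) f (to_bidual a).
Proof.
  apply sig_eq.
  apply functional_extensionality_dep; intro y.
  apply functional_extensionality_dep; intro z.
  apply der_eq; simpl; rewrite comp_idr, comp_assoc; reflexivity.
Qed.

Lemma from_bidual_over (x : plus_ob t W) (eta : ppob BIDUAL x) :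
  fmap t (proj1_sig (proj1_sig eta unit_minus_ob kappa_perp)) ;; eqhom (eq_refl : W = W)
  = eqhom (eq_refl : fob t (pP x) = fob t (pP x)) ;; pc x.
Proof.
  destruct (proj1_sig eta unit_minus_ob kappa_perp) as [al Hal]; simpl in *.
  rewrite Hal, !comp_idr, comp_idl; reflexivity.
Qed.

Definition from_bidual (x : plus_ob t W) (eta : ppob BIDUAL x) : ppob RP x :=
  exist _ _ (from_bidual_over eta).

Lemma from_to_bidual (x : plus_ob t W) (a : ppob RP x) : from_bidual (to_bidual a) = a.
Proof. apply sig_eq; simpl; rewrite perp_factor_kappa_perp; apply comp_idr. Qed.

Lemma to_from_bidual (x : plus_ob t W) (eta : ppob BIDUAL x) : to_bidual (from_bidual eta) = eta.
Proof.
  apply sig_eq.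
  apply functional_extensionality_dep; intro y.
  apply functional_extensionality_dep; intro z.
  apply der_eq.
  transitivity
    (proj1_sig (proj1_sig eta y (pmact (p := perp_r PHI) (perp_factor_hom z) kappa_perp))).
  - rewrite (proj2_sig eta); simpl; rewrite comp_idl; reflexivity.
  - rewrite perp_kappa_perp_act; reflexivity.
Qed.

Theorem pushforward_plus_bidual : natiso_plus RP BIDUAL.
Proof.
  exists (exist _ to_bidual to_bidual_natural); intro x.
  exists (@from_bidual x); split; [apply from_to_bidual | apply to_from_bidual].
Qed.

End BidualOfPushforward.

Theorem proposition4p14 (D T : MonCat) (t : SMFunctor D T) (M : Monoid T) :
  enough_pushforwards t ->
  forall (P Q : D) (eP : fob t P = mW M) (eQ : fob t Q = mW M)
         (R : D) (eR : fob t R = mW M) (kappa : hom (ten P Q) R),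
    (* R = P ⊗_W Q := p_!(P ⊗ Q), with kappa the pushforward derivation *)
    is_pushforward (ten_over eP eQ) (mmul M) eR kappa ->
    natiso_plus
      (plus_psh eR)
      (perp_l (perp_r (day (mmul M) (plus_psh eP) (plus_psh eQ)))).
Proof.
  intros _ P Q eP eQ R eR kappa.
  revert P Q eP eQ R eR kappa; generalize (mmul M); generalize (mW M).
  intros W p P Q eP eQ R eR; destruct eR; intros kappa Hpf.
  exact (pushforward_plus_bidual eP eQ Hpf).
Qed.
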